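(* Fix $\Delta>0$. In the $\mathrm{EDD}(\lambda)$ model with a global clock, the probability that a run of the CORE$(\Delta)$-Message-Chain hybrid protocol is correct is at least $(1-e^{-\lambda\Delta})^n$.
   Context: Agents $i_0,i_1,\ldots,i_n$ share an accurate global clock and are connected by a complete reliable network; the delay of each message is an independent exponential random variable with parameter $\lambda$. At time $0$ the supervisor $i_0$ receives an external input. The CORE$(\Delta)$-Message-Chain hybrid protocol: at time $0$, $i_0$ sends a ''trigger'' message to each of $i_1,\ldots,i_n$ and additionally sends an ''act'' message to $i_1$. A worker $i_k$ that receives a chain message (the ''act'' message for $i_1$, or the chain message from $i_{k-1}$ for $k\ge2$) before having acted performs its action $\alpha_k$ immediately, sends a chain message to $i_{k+1}$ (if $k<n$), and terminates. Until then, $i_k$ follows CORE$(\Delta)$: upon receiving the trigger it waits until the global time is at least $\Delta$ and then performs $\alpha_k$ (immediately if the trigger arrives after $\Delta$) and terminates; a terminated agent does not propagate the chain. With $t_k$ the time at which $i_k$ performs $\alpha_k$, a run is correct if $t_1\le t_2\le\cdots\le t_n<\infty$. *)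

From HB Require Import structures.
From mathcomp Require Import all_boot all_order all_algebra.
From mathcomp Require Import all_classical all_reals all_analysis.
Set Implicit Arguments. Unset Strict Implicit. Unset Printing Implicit Defensive.
Import Order.TTheory GRing.Theory Num.Theory.
Local Open Scope classical_set_scope.
Local Open Scope ring_scope.

(* Index type of the messages whose delays matter, for n workers:
   - inl (inl k) : the trigger from i_0 to worker i_(k+1)      (k : 'I_n)
   - inl (inr tt): the "act" message from i_0 to i_1
   - inr k       : the chain message from i_(k+1) to i_(k+2)   (k : 'I_n.-1) *)
Definition msg (n : nat) : finType := (('I_n + unit) + 'I_n.-1)%type.

Section Protocol.
Variables (R : realType) (n : nat) (Delta : R) (delay : msg n -> R).

Definition trig_delay (k : nat) : R :=
  oapp (fun i : 'I_n => delay (inl (inl i))) 0 (insub k).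
Definition chain_delay (k : nat) : R :=
  oapp (fun i : 'I_n.-1 => delay (inr i)) 0 (insub k).
Definition act_delay : R := delay (inl (inr tt)).

(* time at which worker i_(k+1) would act under CORE(Delta) alone *)
Definition core_time (k : nat) : R := Num.max Delta (trig_delay k).

(* arrival time of a chain message at worker i_(k+1) (None: never sent) *)
Fixpoint chain_arrival (k : nat) : option R :=
  match k with
  | 0 => Some act_delay
  | k'.+1 =>
      match chain_arrival k' with
      | Some r => if r < core_time k' then Some (r + chain_delay k') else None
      | None => None
      end
  end.

Definition action_time (k : nat) : R :=
  match chain_arrival k with
  | Some r => if r < core_time k then r else core_time k
  | None => core_time k
  end.

Definition run_correct : Prop :=
  forall k : nat, (k.+1 < n)%N -> action_time k <= action_time k.+1.
End Protocol.

Definition mutually_independent (d : measure_display) (T : measurableType d)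
    (R : realType) (P : probability T R) (I : finType) (X : I -> T -> R) : Prop :=
  forall B : I -> set R, (forall i, measurable (B i)) ->
    P (\bigcap_(i in [set: I]) (X i @^-1` B i)) =
    (\big[*%E/1%E]_(i : I) P (X i @^-1` B i))%E.

Definition exp_distributed (d : measure_display) (T : measurableType d)
    (R : realType) (P : probability T R) (lambda : R) (X : T -> R) : Prop :=
  forall B : set R, measurable B -> P (X @^-1` B) = exponential_prob lambda B.

From HB Require Import structures.
From mathcomp Require Import all_boot all_order all_algebra.
From mathcomp Require Import all_classical all_reals all_analysis.
From mathcomp Require Import measurable_realfun.
Set Implicit Arguments.
Unset Strict Implicit.
Unset Printing Implicit Defensive.

Import Order.TTheory GRing.Theory Num.Theory.
Local Open Scope classical_set_scope.
Local Open Scope ring_scope.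

(* Once every trigger has arrived by time Delta, a worker acts when the chain
   message reaches it if that happens before Delta, and at Delta otherwise;
   after the chain is cut, the remaining workers act at Delta or later.  As
   chain delays are nonnegative, the action times are then nondecreasing.  So
   the run is correct whenever the n trigger delays lie in [0, Delta] and the
   chain delays are nonnegative, an event of probability
   (1 - e^(-lambda Delta))^n by independence. *)

Section EarlyTriggers.
Variables (R : realType) (n : nat) (Delta : R) (delay : msg n -> R).

Lemma Delta_le_core_time k : Delta <= core_time Delta delay k.
Proof. by rewrite /core_time le_max lexx. Qed.

Lemma core_time_early k : (k < n)%N ->
  (forall i, delay (inl (inl i)) <= Delta) -> core_time Delta delay k = Delta.
Proof.
by move=> kn trig_early; rewrite /core_time /trig_delay insubT /=; apply/max_idPl.
Qed.

Lemma chain_delay_ge0 k :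
  (forall i, 0 <= delay (inr i)) -> 0 <= chain_delay delay k.
Proof. by move=> chain_ge0; rewrite /chain_delay; case: insubP => //= i. Qed.

Lemma run_correct_early_triggers :
  (forall i, delay (inl (inl i)) <= Delta) ->
  (forall i, 0 <= delay (inr i)) -> run_correct Delta delay.
Proof.
move=> trig_early chain_ge0 k kn.
rewrite /action_time /= (core_time_early (ltnW kn) trig_early).
case: (chain_arrival Delta delay k) => [r|]; last exact: Delta_le_core_time.
case: ifPn => [r_early|_]; last exact: Delta_le_core_time.
case: ifP => _; first by rewrite lerDl chain_delay_ge0.
exact: le_trans (ltW r_early) (Delta_le_core_time _).
Qed.

End EarlyTriggers.

Section MeasurableRun.
Variables (d : measure_display) (T : measurableType d) (R : realType) (n : nat).
Variables (Delta : R) (delay : T -> msg n -> R).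
Hypothesis measurable_delay : forall m, measurable_fun [set: T] (delay^~ m).

Lemma measurable_trig_delay k :
  measurable_fun [set: T] (fun w => trig_delay (delay w) k).
Proof. by rewrite /trig_delay; case: (insub k) => [i|] /=. Qed.

Lemma measurable_chain_delay k :
  measurable_fun [set: T] (fun w => chain_delay (delay w) k).
Proof. by rewrite /chain_delay; case: (insub k) => [i|] /=. Qed.

Lemma measurable_core_time k :
  measurable_fun [set: T] (fun w => core_time Delta (delay w) k).
Proof. exact/measurable_maxr/measurable_trig_delay. Qed.

(* The option-valued arrival time is measured through the event where the
   chain message is sent and its arrival time there. *)
Lemma chain_arrival_measurable k : exists (sent : T -> bool) (arrival : T -> R),
  [/\ measurable_fun [set: T] sent, measurable_fun [set: T] arrival &
      forall w, chain_arrival Delta (delay w) k =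
                if sent w then Some (arrival w) else None].
Proof.
elim: k => [|k [sent [arrival [msent marrival arrivalE]]]].
  exists (fun=> true), (fun w => act_delay (delay w)).
  by split => //; exact: measurable_delay.
exists (fun w => sent w && (arrival w < core_time Delta (delay w) k)).
exists (fun w => arrival w + chain_delay (delay w) k); split.
- apply: measurable_and => //.
  exact: measurable_fun_ltr (measurable_core_time k).
- exact: measurable_funD (measurable_chain_delay k).
- by move=> w /=; rewrite arrivalE; case: (sent w).
Qed.

Lemma measurable_action_time k :
  measurable_fun [set: T] (fun w => action_time Delta (delay w) k).
Proof.
have [sent [arrival [msent marrival arrivalE]]] := chain_arrival_measurable k.
pose core w := core_time Delta (delay w) k.
have -> : (fun w => action_time Delta (delay w) k) =
    (fun w => if sent w then (if arrival w < core w then arrival w else core w)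
              else core w).
  by apply/funext => w; rewrite /action_time arrivalE; case: (sent w).
have mcore : measurable_fun [set: T] core by exact: measurable_core_time.
by apply: measurable_fun_ifT => //; apply: measurable_fun_ifT => //;
   apply: measurable_fun_ltr.
Qed.

Lemma measurable_run_correct :
  measurable [set w | run_correct Delta (delay w)].
Proof.
pose ordered k w :=
  action_time Delta (delay w) k <= action_time Delta (delay w) k.+1.
have -> : [set w | run_correct Delta (delay w)] =
    \bigcap_k [set w | (k.+1 < n)%N -> ordered k w].
  apply/seteqP; split => w /= correct k; last exact: correct k I.
  by move=> _; apply: correct.
apply: bigcapT_measurable => k.
have [_|_] := ltnP k.+1 n; last first.
  by rewrite (_ : [set w | _] = setT) //; apply/seteqP; split => w //=.
rewrite (_ : [set w | _] = [set: T] `&` ordered k @^-1` [set true]).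
  by apply: measurable_fun_ler => //; exact: measurable_action_time.
by apply/seteqP; split => w /= => [/(_ isT)|[_ ->]].
Qed.

End MeasurableRun.

Lemma exponential_prob_itv0y (R : realType) (lambda : R) : 0 < lambda ->
  exponential_prob lambda `[0, +oo[%classic = 1%E.
Proof.
move=> lambda_gt0; rewrite -(integral_exponential_pdf lambda_gt0).
have mpdf : measurable_fun setT (EFin \o exponential_pdf lambda).
  by apply/measurable_EFinP; exact: measurable_exponential_pdf.
rewrite -[in RHS](setUv `[0, +oo[%classic) ge0_integral_setU //=; last 4 first.
- exact: measurableC.
- by rewrite setUv.
- by move=> x _; rewrite lee_fin exponential_pdf_ge0 // ltW.
- exact/disj_setPCl.
rewrite [X in _ = (_ + X)%E]integral0_eq ?adde0 // => x x_lt0.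
by rewrite /exponential_pdf patchE ifF // memNset.
Qed.

Definition early_window (R : realType) (n : nat) (Delta : R) (m : msg n) :
    set R :=
  match m with
  | inl (inl _) => `[0, Delta]
  | inl (inr _) => setT
  | inr _ => `[0, +oo[
  end.

Lemma measurable_early_window (R : realType) (n : nat) (Delta : R) (m : msg n) :
  measurable (early_window Delta m).
Proof. by case: m => [[i|u]|i] /=. Qed.

Lemma run_correct_early_window (R : realType) (n : nat) (Delta : R)
    (delay : msg n -> R) :
  (forall m, early_window Delta m (delay m)) -> run_correct Delta delay.
Proof.
move=> early; apply: run_correct_early_triggers => i.
- by have /andP[] := early (inl (inl i)).
- by have /andP[] := early (inr i).
Qed.

Lemma prob_early_window (R : realType) (d : measure_display)
    (T : measurableType d) (P : probability T R) (lambda Delta : R) (n : nat)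
    (X : msg n -> T -> R) :
  0 < lambda -> 0 < Delta ->
  mutually_independent P X -> (forall m, exp_distributed P lambda (X m)) ->
  P (\bigcap_(m in [set: msg n]) X m @^-1` early_window Delta m) =
  ((1 - expR (- (lambda * Delta))) ^+ n)%:E.
Proof.
move=> lambda_gt0 Delta_gt0 indep expX.
rewrite (indep (early_window Delta)); last exact: measurable_early_window.
rewrite !big_sumType /=.
rewrite (eq_bigr (fun=> (1 - expR (- (lambda * Delta)))%:E)); last first.
  by move=> i _; rewrite expX // exponential_prob_itv0c // mulNr EFinB.
rewrite [X in (_ * X * _)%E]big1 => [|u _]; last first.
  by rewrite expX // /exponential_prob integral_exponential_pdf.
rewrite [X in (_ * X)%E]big1 => [|i _]; last first.
  by rewrite expX // exponential_prob_itv0y.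
by rewrite !mule1 prodEFin prodr_const card_ord.
Qed.

Theorem theorem4 (R : realType) (d : measure_display) (T : measurableType d)
    (P : probability T R) (lambda Delta : R) (n : nat)
    (X : msg n -> {RV P >-> R}) :
  0 < lambda -> 0 < Delta ->
  mutually_independent P (fun m => (X m : T -> R)) ->
  (forall m, exp_distributed P lambda (X m)) ->
  (((1 - expR (- (lambda * Delta))) ^+ n)%:E
     <= P [set w | @run_correct R n Delta (fun m => X m w)])%E.
Proof.
move=> lambda_gt0 Delta_gt0 indep expX.
have measurableX m : measurable_fun [set: T] (X m) by exact: measurable_funPT.
rewrite -(prob_early_window lambda_gt0 Delta_gt0 indep expX).
apply: le_measure; rewrite ?inE.
- apply: fin_bigcap_measurable; first exact: finite_finset.
  move=> m _; rewrite -[_ @^-1` _]setTI.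
  exact: measurableX (measurable_early_window _ _).
- exact: measurable_run_correct.
- by move=> w early; apply: run_correct_early_window => m; exact: early.
Qed.
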